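(* The class of weakly right coherent monoids is closed under retracts: if $S$ is a weakly right coherent monoid and $T$ is a monoid that is a retract of $S$, then $T$ is weakly right coherent.
   Context: A monoid $M$ is weakly right coherent if every finitely generated right ideal of $M$ is finitely presented as a right $M$-act (known to be equivalent to $M$ being right ideal Howson and finitely right equated: the intersection of any two finitely generated right ideals is finitely generated, and every $\mathbf{r}_M(a)=\{(s,t)\mid as=at\}$ is finitely generated as a right congruence). A retract of a semigroup $S$ is a subsemigroup $T$ for which there is a homomorphism $\phi:S\to T$ with $t\phi=t$ for all $t\in T$. *)

From mathcomp Require Import all_boot.
From Stdlib Require Import List.

Set Implicit Arguments.
Unset Strict Implicit.
Unset Printing Implicit Defensive.

Record monoid := Monoid {
  mcarrier :> Type;
  mmul : mcarrier -> mcarrier -> mcarrier;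
  mone : mcarrier;
  mmulA : forall a b c, mmul a (mmul b c) = mmul (mmul a b) c;
  mmul1l : forall a, mmul mone a = a;
  mmul1r : forall a, mmul a mone = a
}.

Arguments mmul {m}.
Arguments mone {m}.

(** Elements of the free right M-act on n generators: pairs (i, s) standing for x_i s,
    with action (i, s) . m = (i, s m). *)
Definition free_act (M : monoid) (n : nat) := ('I_n * M)%type.

Inductive gen_cong (M : monoid) (n : nat) (H : list (free_act M n * free_act M n))
  : free_act M n -> free_act M n -> Prop :=
| gc_base u v : In (u, v) H -> gen_cong H u v
| gc_refl u : gen_cong H u u
| gc_sym u v : gen_cong H u v -> gen_cong H v u
| gc_trans u v w : gen_cong H u v -> gen_cong H v w -> gen_cong H u w
| gc_act u v (m : M) : gen_cong H u v ->
    gen_cong H (u.1, mmul u.2 m) (v.1, mmul v.2 m).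

Definition fg_right_ideal (M : monoid) (X : list M) : M -> Prop :=
  fun x => exists a, In a X /\ exists m : M, x = mmul a m.

(** A subset I of M, closed under right multiplication and regarded as a right M-act
    (action by right multiplication), is finitely presented: there is a surjective act
    morphism  F_n -> I,  (i, s) |-> g_i s, from the free act of finite rank n whose
    kernel congruence is generated by finitely many pairs (so I is isomorphic to
    F_n / rho with rho finitely generated). *)
Definition fin_presented_right_act (M : monoid) (I : M -> Prop) : Prop :=
  exists (n : nat) (g : 'I_n -> M),
    (forall i, I (g i)) /\
    (forall x, I x -> exists (i : 'I_n) (m : M), x = mmul (g i) m) /\
    exists H : list (free_act M n * free_act M n),
      (forall u v, In (u, v) H -> mmul (g u.1) u.2 = mmul (g v.1) v.2) /\
      (forall u v : free_act M n,
          mmul (g u.1) u.2 = mmul (g v.1) v.2 -> gen_cong H u v).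

Definition weakly_right_coherent (M : monoid) : Prop :=
  forall X : list M, fin_presented_right_act (fg_right_ideal X).

From mathcomp Require Import all_boot.
From Stdlib Require Import List ClassicalEpsilon.

Set Implicit Arguments.
Unset Strict Implicit.
Unset Printing Implicit Defensive.

(* Given a finite X in T, present iota(X) S by generators g_i and relations H,
   and factor iota(x_j) = g_(p j) c_j and g_i = iota(x_(q i)) d_i. Since
   phi (iota t s) = t phi s, the map (i, s) |-> (q i, phi (d_i s)) from words over
   the g_i to words over the x_j respects evaluation and the action. Hence the
   images of H, together with the relations x_j = x_(q (p j)) phi (d_(p j) c_j),
   present X T: every word (j, s) is related to the image of (p j, c_j iota(s)),
   and two such words with equal values in T have, after applying iota, preimages
   with equal values in S, which are H-related. *)

Lemma In_of_mem (A : eqType) (x : A) (s : seq.seq A) : x \in s -> In x s.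
Proof. by elim: s => [|y s IH] //=; rewrite seq.in_cons => /orP [/eqP ->|/IH]; auto. Qed.

Lemma gen_cong_map (M N : monoid) (n k : nat)
    (H : list (free_act M n * free_act M n)) (H' : list (free_act N k * free_act N k))
    (f : free_act M n -> free_act N k) (h : M -> N) :
  (forall u m, f (u.1, mmul u.2 m) = ((f u).1, mmul (f u).2 (h m))) ->
  (forall u v, In (u, v) H -> gen_cong H' (f u) (f v)) ->
  forall u v, gen_cong H u v -> gen_cong H' (f u) (f v).
Proof.
move=> f_act f_base u v; elim=> {u v} [u v /f_base //|u|u v _|u v w _ + _|u v m _].
- exact: gc_refl.
- exact: gc_sym.
- exact: gc_trans.
- by rewrite !f_act; apply: gc_act.
Qed.

Section FgRightIdeal.

Variables (M : monoid) (X : list M).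

Definition ideal_gen (j : 'I_(length X)) : M := nth j X mone.

Lemma ideal_gen_In j : In (ideal_gen j) X.
Proof. by apply: nth_In; apply/ltP. Qed.

Lemma fg_right_ideal_In a : In a X -> fg_right_ideal X a.
Proof. by move=> aX; exists a; split=> //; exists mone; rewrite mmul1r. Qed.

Lemma fg_right_idealP x :
  fg_right_ideal X x <-> exists (j : 'I_(length X)) (m : M), x = mmul (ideal_gen j) m.
Proof.
split=> [[a [aX [m ->]]]|[j [m ->]]].
  have [j [/ltP lt_j <-]] := In_nth _ _ mone aX.
  by exists (Ordinal lt_j), m.
by exists (ideal_gen j); split; [exact: ideal_gen_In | exists m].
Qed.

End FgRightIdeal.

Arguments ideal_gen {M} X j.

Lemma fg_right_ideal_map (N M : monoid) (f : N -> M) (X : list N) x :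
  fg_right_ideal (List.map f X) x ->
  exists (j : 'I_(length X)) (m : M), x = mmul (f (ideal_gen X j)) m.
Proof.
move=> [a [/in_map_iff [b [<- bX]] [m ->]]].
have [j [/ltP lt_j <-]] := In_nth _ _ mone bX.
by exists (Ordinal lt_j), m.
Qed.

Section Retract.

Variables (S T : monoid) (iota : T -> S) (phi : S -> T).
Hypothesis iotaM : forall a b : T, iota (mmul a b) = mmul (iota a) (iota b).
Hypothesis phiM : forall a b : S, phi (mmul a b) = mmul (phi a) (phi b).
Hypothesis iotaK : forall t : T, phi (iota t) = t.

Lemma phi_iotaMl t s : phi (mmul (iota t) s) = mmul t (phi s).
Proof. by rewrite phiM iotaK. Qed.

Section PullPresentation.

Variables (X : list T) (n : nat) (g : 'I_n -> S).
Variable H : list (free_act S n * free_act S n).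
Hypothesis H_sound :
  forall u v, In (u, v) H -> mmul (g u.1) u.2 = mmul (g v.1) v.2.
Hypothesis H_complete : forall u v : free_act S n,
  mmul (g u.1) u.2 = mmul (g v.1) v.2 -> gen_cong H u v.

Local Notation k := (length X).
Local Notation x_ := (ideal_gen X).

Variables (p : 'I_k -> 'I_n) (c : 'I_k -> S) (q : 'I_n -> 'I_k) (d : 'I_n -> S).
Hypothesis iota_x_factor : forall j, iota (x_ j) = mmul (g (p j)) (c j).
Hypothesis g_factor : forall i, g i = mmul (iota (x_ (q i))) (d i).

Definition pull (w : free_act S n) : free_act T k := (q w.1, phi (mmul (d w.1) w.2)).

Lemma pull_eval w : mmul (x_ (pull w).1) (pull w).2 = phi (mmul (g w.1) w.2).
Proof. by rewrite g_factor -mmulA phi_iotaMl. Qed.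

Lemma pull_act w m : pull (w.1, mmul w.2 m) = ((pull w).1, mmul (pull w).2 (phi m)).
Proof. by rewrite /pull /= mmulA phiM. Qed.

Definition gen_rel (j : 'I_k) : free_act T k * free_act T k :=
  ((j, mone), pull (p j, c j)).

Definition pulled_rels : list (free_act T k * free_act T k) :=
  List.map (fun uv => (pull uv.1, pull uv.2)) H ++ List.map gen_rel (enum 'I_k).

Lemma pulled_rels_sound u v :
  In (u, v) pulled_rels -> mmul (x_ u.1) u.2 = mmul (x_ v.1) v.2.
Proof.
move=> /(in_app_or _ _ (u, v)) [] /(proj1 (in_map_iff _ _ _)) [w [[<- <-] w_in]].
  by case: w w_in => w w' w_in; rewrite !pull_eval (H_sound w_in).
by rewrite pull_eval /= mmul1r -iota_x_factor iotaK.
Qed.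

Lemma gen_cong_pull u v : gen_cong H u v -> gen_cong pulled_rels (pull u) (pull v).
Proof.
apply: (gen_cong_map (h := phi)) => [w m|w w' wH]; first exact: pull_act.
apply: gc_base; apply: in_or_app; left.
exact: (in_map (fun uv => (pull uv.1, pull uv.2)) _ (w, w')).
Qed.

Lemma gen_cong_pull_gen j s :
  gen_cong pulled_rels (j, s) (pull (p j, mmul (c j) (iota s))).
Proof.
have rel_j : gen_cong pulled_rels (gen_rel j).1 (gen_rel j).2.
  apply: gc_base; apply: in_or_app; right; rewrite -surjective_pairing.
  by apply/in_map/In_of_mem/mem_enum.
by have := gc_act s rel_j; rewrite /= mmul1l /pull /= mmulA !phiM iotaK.
Qed.

Lemma pulled_rels_complete u v :
  mmul (x_ u.1) u.2 = mmul (x_ v.1) v.2 -> gen_cong pulled_rels u v.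
Proof.
case: u v => [j s] [l t] /= E.
apply: gc_trans (gen_cong_pull_gen j s) _.
apply: gc_trans _ (gc_sym (gen_cong_pull_gen l t)).
apply: gen_cong_pull; apply: H_complete => /=.
by rewrite !mmulA -!iota_x_factor -!iotaM E.
Qed.

Lemma fin_presented_of_factors : fin_presented_right_act (fg_right_ideal X).
Proof.
exists k, x_; split; [|split].
- by move=> j; apply/fg_right_ideal_In/ideal_gen_In.
- by move=> x /fg_right_idealP.
- exists pulled_rels; split; [exact: pulled_rels_sound | exact: pulled_rels_complete].
Qed.

End PullPresentation.

Lemma fin_presented_retract (X : list T) :
  fin_presented_right_act (fg_right_ideal (List.map iota X)) ->
  fin_presented_right_act (fg_right_ideal X).
Proof.
move=> [n [g [g_in [g_cover [H [H_sound H_complete]]]]]].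
have [pc iota_x_factor] : exists pc : 'I_(length X) -> 'I_n * S,
    forall j, iota (ideal_gen X j) = mmul (g (pc j).1) (pc j).2.
  apply: (choice (fun j (im : 'I_n * S) => iota (ideal_gen X j) = mmul (g im.1) im.2)).
  move=> j.
  have [i [m ->]] := g_cover _ (fg_right_ideal_In (in_map iota _ _ (ideal_gen_In j))).
  by exists (i, m).
have [qd g_factor] : exists qd : 'I_n -> 'I_(length X) * S,
    forall i, g i = mmul (iota (ideal_gen X (qd i).1)) (qd i).2.
  apply: (choice (fun i (jm : 'I_(length X) * S) =>
                     g i = mmul (iota (ideal_gen X jm.1)) jm.2)).
  move=> i; have [j [m ->]] := fg_right_ideal_map (g_in i).
  by exists (j, m).
exact: (fin_presented_of_factors H_sound H_complete
  (p := fun j => (pc j).1) (c := fun j => (pc j).2)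
  (q := fun i => (qd i).1) (d := fun i => (qd i).2) iota_x_factor g_factor).
Qed.

End Retract.

Theorem mainTheorem4 (S T : monoid) (iota : T -> S) (phi : S -> T) :
  (forall a b : T, iota (mmul a b) = mmul (iota a) (iota b)) ->
  (forall a b : S, phi (mmul a b) = mmul (phi a) (phi b)) ->
  (forall t : T, phi (iota t) = t) ->
  weakly_right_coherent S -> weakly_right_coherent T.
Proof.
move=> iotaM phiM iotaK S_coherent X.
exact: (fin_presented_retract iotaM phiM iotaK (S_coherent _)).
Qed.
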